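(* Let $S$ be a $\mathcal{C}$-semigroup with $S\neq \mathcal{C}$ and genus $g$. Then $S$ is symmetric if and only if $g=\# I_S(F(S))$.
   Context: An integer cone $\mathcal{C}\subseteq\mathbb{N}^p$ is the set of integer points of a finitely generated rational cone in $\mathbb{Q}_{\ge0}^p$. A $\mathcal{C}$-semigroup is a subset $S\subseteq\mathcal{C}$ containing $0$, closed under addition, with $\mathcal{C}\setminus S$ finite; $\mathcal{H}(S)=\mathcal{C}\setminus S$ and $g=\#\mathcal{H}(S)$. A monomial order $\preceq$ on $\mathbb{N}^p$ is fixed (total order, compatible with addition, $\mathbf 0\preceq\mathbf c$ for all $\mathbf c$), and $F(S)=\max_\preceq\mathcal{H}(S)$. $\mathrm{PF}(S)=\{\mathbf x\in\mathcal{H}(S)\mid \mathbf x+(S\setminus\{0\})\subseteq S\}$. $S$ is symmetric if $\mathrm{PF}(S)=\{F(S)\}$. For $L\subseteq\mathbb{N}^p$, $\mathbf x\le_L\mathbf y$ means $\mathbf y-\mathbf x\in L$. For $\mathbf n\in\mathcal{C}$, $I_S(\mathbf n)=\{\mathbf s\in S\mid \mathbf s\le_{\mathcal{C}}\mathbf n\}$. *)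

From mathcomp Require Import all_boot all_order all_algebra.
Set Implicit Arguments. Unset Strict Implicit. Unset Printing Implicit Defensive.
Import Order.TTheory GRing.Theory Num.Theory.

Definition vec (p : nat) := {ffun 'I_p -> nat}.
Definition vadd (p : nat) (x y : vec p) : vec p := [ffun i => x i + y i].
Definition vzero (p : nat) : vec p := [ffun => 0%N].

Definition vset (p : nat) := vec p -> Prop.

Definition has_card (p : nat) (A : vset p) (n : nat) : Prop :=
  exists s : seq (vec p), [/\ uniq s, (forall x, x \in s <-> A x) & size s = n].

(* C is an integer cone: the set of integer points of the rational cone
   generated by finitely many vectors of Q_{>=0}^p. *)
Definition integer_cone (p : nat) (C : vset p) : Prop :=
  exists (k : nat) (gens : 'I_k -> 'I_p -> rat),
    (forall j i, 0 <= gens j i)%R /\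
    forall x : vec p, C x <->
      exists lam : 'I_k -> rat, (forall j, 0 <= lam j)%R /\
        forall i, ((x i)%:R = \sum_(j < k) lam j * gens j i)%R.

Definition monomial_order (p : nat) (le : vec p -> vec p -> Prop) : Prop :=
  (forall x, le x x) /\
  (forall x y, le x y -> le y x -> x = y) /\
  (forall x y z, le x y -> le y z -> le x z) /\
  (forall x y, le x y \/ le y x) /\
  (forall x y z, le x y -> le (vadd x z) (vadd y z)) /\
  (forall c, le (vzero p) c).

Definition holes (p : nat) (C S : vset p) : vset p := fun x => C x /\ ~ S x.

Definition C_semigroup (p : nat) (C S : vset p) : Prop :=
  [/\ (forall x, S x -> C x), S (vzero p),
      (forall x y, S x -> S y -> S (vadd x y)) &
      exists n, has_card (holes C S) n].

Definition is_Frobenius (p : nat) (le : vec p -> vec p -> Prop) (C S : vset p)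
  (f : vec p) : Prop :=
  holes C S f /\ forall h, holes C S h -> le h f.

Definition PF (p : nat) (C S : vset p) : vset p :=
  fun x => holes C S x /\ forall s, S s -> s <> vzero p -> S (vadd x s).

Definition symmetric_sg (p : nat) (C S : vset p) (f : vec p) : Prop :=
  forall x, PF C S x <-> x = f.

Definition le_L (p : nat) (L : vset p) (x y : vec p) : Prop :=
  exists c, L c /\ vadd x c = y.

Definition I_S (p : nat) (C S : vset p) (n : vec p) : vset p :=
  fun s => S s /\ le_L C s n.

From mathcomp Require Import all_boot all_order all_algebra.
From Stdlib Require Import Classical.
Set Implicit Arguments. Unset Strict Implicit. Unset Printing Implicit Defensive.
Import Order.TTheory GRing.Theory Num.Theory.

(* Both sides of the equivalence are shown equivalent to the condition
   "F(S) - h lies in S for every hole h" ([dual_in_S]):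
   - symmetric -> dual: every hole h lies below a pseudo-Frobenius element
     along S (take the largest hole of h + S, which exists since H(S) is
     finite and the monomial order is total); by symmetry that element is F.
   - dual -> symmetric: F is always pseudo-Frobenius, and a pseudo-Frobenius
     x with F = x + s, s in S \ {0}, would force F in S.
   - counting: s |-> F - s is a bijection between I_S(F) and the set
     [dual_holes] of holes h with F - h in S; as [dual_holes] is contained
     in the finite set H(S), it has g elements iff it is all of H(S). *)

Definition vsub p (x y : vec p) : vec p := [ffun i => x i - y i].

Lemma vaddC p (x y : vec p) : vadd x y = vadd y x.
Proof. by apply/ffunP=> i; rewrite !ffunE addnC. Qed.

Lemma vaddA p (x y z : vec p) : vadd x (vadd y z) = vadd (vadd x y) z.
Proof. by apply/ffunP=> i; rewrite !ffunE addnA. Qed.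

Lemma vadd0 p (x : vec p) : vadd (vzero p) x = x.
Proof. by apply/ffunP=> i; rewrite !ffunE. Qed.

Lemma vaddr0 p (x : vec p) : vadd x (vzero p) = x.
Proof. by rewrite vaddC vadd0. Qed.

Lemma vaddKsub p (x c y : vec p) : vadd x c = y -> vsub y x = c.
Proof. by move=> <-; apply/ffunP=> i; rewrite !ffunE addKn. Qed.

Lemma vadd_idPr p (x s : vec p) : vadd x s = x -> s = vzero p.
Proof.
move=> E; apply/ffunP=> i; have /eqP := congr1 (fun v : vec p => v i) E.
by rewrite !ffunE -{2}[x i]addn0 eqn_add2l => /eqP.
Qed.

Lemma integer_cone_add p (C : vset p) : integer_cone C ->
  forall x y, C x -> C y -> C (vadd x y).
Proof.
case=> k [gens [_ HC]] x y /HC [lx [lx_ge0 Ex]] /HC [ly [ly_ge0 Ey]].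
apply/HC; exists (fun j => lx j + ly j)%R; split=> [j|i].
  by rewrite addr_ge0.
rewrite ffunE natrD Ex Ey -big_split /=.
by apply: eq_bigr => j _; rewrite mulrDl.
Qed.

Section Cardinals.
Variable p : nat.
Implicit Types (A B : vset p) (n : nat).

Lemma has_card_ext A B n : (forall x, A x <-> B x) -> has_card A n -> has_card B n.
Proof.
move=> AB [s [us ms ss]]; exists s; split=> // x.
by rewrite ms; exact: AB.
Qed.

Lemma has_card_bij A B n (phi psi : vec p -> vec p) :
  (forall x, A x -> B (phi x)) -> (forall y, B y -> A (psi y)) ->
  (forall x, A x -> psi (phi x) = x) -> (forall y, B y -> phi (psi y) = y) ->
  has_card A n -> has_card B n.
Proof.
move=> AB BA phiK psiK [s [us ms ss]]; exists (map phi s); split.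
- rewrite map_inj_in_uniq // => x y /ms Ax /ms Ay E.
  by rewrite -(phiK x Ax) -(phiK y Ay) E.
- move=> y; split=> [/mapP [x /ms Ax ->]|By]; first exact: AB.
  by apply/mapP; exists (psi y); [apply/ms; exact: BA | rewrite psiK].
- by rewrite size_map.
Qed.

Lemma has_card_involution A B n (phi : vec p -> vec p) :
  (forall x, A x -> B (phi x)) -> (forall y, B y -> A (phi y)) ->
  (forall x, A x -> phi (phi x) = x) -> (forall y, B y -> phi (phi y) = y) ->
  has_card A n <-> has_card B n.
Proof. by move=> AB BA phiA phiB; split; apply: (has_card_bij (phi := phi) (psi := phi)). Qed.

Lemma has_card_subset_full A B n :
  (forall x, B x -> A x) -> has_card A n -> has_card B n -> forall x, A x -> B x.
Proof.
move=> BA [sA [_ mA szA]] [sB [uB mB szB]] x /mA.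
have sBA : {subset sB <= sA} by move=> y /mB /BA /mA.
have [_ eq_sBA] := uniq_min_size uB sBA (eq_leq (etrans szA (esym szB))).
by rewrite -eq_sBA => /mB.
Qed.

End Cardinals.

Lemma exists_max (T : eqType) (le : T -> T -> Prop) (P : T -> Prop) (l : seq T) :
  (forall x y, le x y \/ le y x) -> (forall x, le x x) ->
  (forall x y z, le x y -> le y z -> le x z) ->
  (exists x, x \in l /\ P x) ->
  exists m, P m /\ forall y, y \in l -> P y -> le y m.
Proof.
move=> total refl trans; elim: l => [|a l IH] [x [lx Px]]; first by [].
have [[m [Pm maxm]] | none] := classic (exists m, P m /\ forall y, y \in l -> P y -> le y m).
- have [Pa|nPa] := classic (P a); last first.
    by exists m; split=> // y; rewrite inE => /orP [/eqP -> //|]; exact: maxm.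
  have [am|ma] := total a m.
    by exists m; split=> // y; rewrite inE => /orP [/eqP -> //|]; exact: maxm.
  exists a; split=> // y; rewrite inE => /orP [/eqP -> //|ly Py].
  exact: trans (maxm y ly Py) ma.
- have noP y : y \in l -> ~ P y by move=> ly Py; apply: none; apply: IH; exists y.
  have Pa : P a by move: lx; rewrite inE => /orP [/eqP <- //|/noP].
  by exists a; split=> // y; rewrite inE => /orP [/eqP -> //|/noP].
Qed.

Section PseudoFrobenius.
Variables (p : nat) (C S : vset p) (le : vec p -> vec p -> Prop).
Hypotheses (C_add : forall x y, C x -> C y -> C (vadd x y))
  (Hle : monomial_order le) (S_C : forall x, S x -> C x) (S_0 : S (vzero p))
  (S_add : forall x y, S x -> S y -> S (vadd x y)).

Lemma le_addr x s : le x (vadd x s).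
Proof.
case: Hle => _ [_ [_ [_ [le_add le0]]]].
by have := le_add _ _ x (le0 s); rewrite vadd0 vaddC.
Qed.

Lemma le_addr_eq0 x s : le (vadd x s) x -> s = vzero p.
Proof.
case: Hle => _ [anti _] le_sx; apply: (@vadd_idPr _ x).
exact: anti le_sx (le_addr x s).
Qed.

Lemma hole_addS x s : holes C S x -> S s -> ~ S (vadd x s) -> holes C S (vadd x s).
Proof. by case=> Cx _ Ss nS; split=> //; apply: C_add => //; exact: S_C. Qed.

Lemma Frobenius_PF f : is_Frobenius le C S f -> PF C S f.
Proof.
case=> hole_f max_f; split=> // s Ss s_neq0; apply: NNPP => nS.
by apply/s_neq0/(@le_addr_eq0 f)/max_f/hole_addS.
Qed.

(* Every hole h lies below some pseudo-Frobenius element m along S, i.e.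
   m - h in S: take the largest hole among the translates h + S. *)
Lemma hole_below_PF n : has_card (holes C S) n ->
  forall h, holes C S h -> exists m s, [/\ PF C S m, S s & vadd h s = m].
Proof.
move=> [hs [_ mhs _]] h hole_h; case: Hle => refl [_ [trans [total _]]].
pose above x := holes C S x /\ exists s, S s /\ x = vadd h s.
have [|m [[hole_m [s [Ss def_m]]] max_m]] :=
    exists_max (P := above) (l := hs) total refl trans.
  exists h; split; first exact/mhs.
  by split=> //; exists (vzero p); rewrite vaddr0.
exists m, s; split=> //; split=> // t St t_neq0; apply: NNPP => nS.
have hole_mt := hole_addS hole_m St nS.
apply/t_neq0/(@le_addr_eq0 m)/max_m; first exact/mhs.
by split=> //; exists (vadd s t); split; [exact: S_add | rewrite def_m vaddA].
Qed.

Definition dual_in_S (f : vec p) : Prop :=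
  forall h, holes C S h -> exists s, S s /\ vadd h s = f.

Lemma symmetric_iff_dual_in_S n f :
  has_card (holes C S) n -> is_Frobenius le C S f ->
  symmetric_sg C S f <-> dual_in_S f.
Proof.
move=> card_holes Frob_f; split=> [sym h hole_h | dual x].
  have [m [s [PF_m Ss hs_m]]] := hole_below_PF card_holes hole_h.
  by exists s; split=> //; rewrite hs_m; apply/sym.
split=> [[hole_x PF_x] | ->]; last exact: Frobenius_PF.
have [s [Ss xs_f]] := dual x hole_x.
have [s0|s_neq0] := classic (s = vzero p); first by rewrite -xs_f s0 vaddr0.
by case: Frob_f => [[_ nSf] _]; case: nSf; rewrite -xs_f; apply: PF_x.
Qed.

End PseudoFrobenius.

Section Duality.
Variables (p : nat) (C S : vset p) (f : vec p).
Hypotheses (S_add : forall x y, S x -> S y -> S (vadd x y)) (f_notin_S : ~ S f).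

Definition dual_holes : vset p := fun h => holes C S h /\ exists s, S s /\ vadd h s = f.

Lemma complement_dual_hole s c : S s -> C c -> vadd s c = f -> dual_holes c.
Proof.
move=> Ss Cc sc_f; split; last by exists s; rewrite vaddC.
by split=> // Sc; apply: f_notin_S; rewrite -sc_f; apply: S_add.
Qed.

(* s |-> f - s is a bijection from I_S(f) onto [dual_holes], with inverse
   h |-> f - h. *)
Lemma card_I_S_dual_holes n : has_card (I_S C S f) n <-> has_card dual_holes n.
Proof.
have vsubK x c : vadd x c = f -> vsub f c = x.
  by rewrite vaddC; exact: vaddKsub.
apply: (has_card_involution n (phi := vsub f)).
- move=> s [Ss [c [Cc sc_f]]]; rewrite (vaddKsub sc_f).
  exact: complement_dual_hole Ss Cc sc_f.
- move=> h [[Ch _] [s [Ss hs_f]]]; rewrite (vaddKsub hs_f).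
  by split=> //; exists h; rewrite vaddC.
- by move=> s [_ [c [_ sc_f]]]; rewrite (vaddKsub sc_f) (vsubK _ _ sc_f).
- by move=> h [_ [s [_ hs_f]]]; rewrite (vaddKsub hs_f) (vsubK _ _ hs_f).
Qed.

(* [dual_holes] sits inside the g holes, so it has g elements iff it
   contains every hole. *)
Lemma card_dual_holes g :
  has_card (holes C S) g -> has_card dual_holes g <-> dual_in_S C S f.
Proof.
move=> card_holes; split=> [card_dual h hole_h | dual].
  have dual_sub : forall x, dual_holes x -> holes C S x by move=> x [].
  by case: (has_card_subset_full dual_sub card_holes card_dual hole_h).
by apply: has_card_ext card_holes => h; split=> [hole_h | []//]; split=> //; exact: dual.
Qed.

End Duality.

(* S symmetric <-> f - h in S for every hole h <-> #I_S(f) = g. *)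
Theorem mainTheorem2 (p : nat) (C S : vset p) (le : vec p -> vec p -> Prop)
  (f : vec p) (g : nat) :
  integer_cone C -> monomial_order le -> C_semigroup C S ->
  ~ (forall x, S x <-> C x) ->
  has_card (holes C S) g ->
  is_Frobenius le C S f ->
  (symmetric_sg C S f <-> has_card (I_S C S f) g).
Proof.
move=> cone_C order_le [S_C S_0 S_add _] _ card_holes Frob_f.
have f_notin_S : ~ S f by case: Frob_f => [[]].
rewrite (symmetric_iff_dual_in_S (integer_cone_add cone_C) order_le S_C S_0 S_add
           card_holes Frob_f).
by rewrite (card_I_S_dual_holes _ S_add f_notin_S) (card_dual_holes _ card_holes).
Qed.
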